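(* Consider the hidden factor model described in the context and suppose Assumptions 1–3 hold. Then for every $j=1,\dots,p$: (i) $\Theta_{j,j}=1/\tau_j^2$ with $$\tau_j^2=(\bar a_j'\bar a_j+\sigma_j^2)-\bar a_j'\bar A_{-j}'\Sigma_{U,-j}^{-1}\bar A_{-j}\bar G_j^{-1}\bar a_j;$$ (ii) $\Theta_{j,-j}=-\alpha_j^{*\prime}/\tau_j^2$ with $\alpha_j^*=\Sigma_{U,-j}^{-1}\bar A_{-j}\bar G_j^{-1}\bar a_j$; (iii) consequently the $j$th row of $\Theta$ is $\big(1/\tau_j^2,\,-\alpha_j^{*\prime}/\tau_j^2\big)$ (with entry $j$ placed first), and stacking these rows over $j=1,\dots,p$ gives $\Theta$.
   Context: Data: $Y=FA+U$ with $Y\in\mathbb R^{n\times p}$ (rows $y_t'$, $t=1,\dots,n$), $F\in\mathbb R^{n\times K}$ (rows $f_t'$, hidden factors), $A\in\mathbb R^{K\times p}$ (loadings), $U\in\mathbb R^{n\times p}$ (rows $u_t'$). For each $j$ write (after reordering) $A=[a_j,A_{-j}']$ with $a_j\in\mathbb R^K$, $A_{-j}\in\mathbb R^{(p-1)\times K}$, so that $y_{jt}=f_t'a_j+u_{jt}$ and $Y_{-jt}=A_{-j}f_t+U_{-jt}\in\mathbb R^{p-1}$ (all outcomes except $j$). Let $\sigma_j^2=\mathrm{var}(u_{jt})$, $\Sigma_{U,-j}=\mathrm{var}(U_{-jt})$, $\Sigma_f=\mathrm{cov}(f_t)$, $\mu_j=Ey_{jt}$, $\mu_{-j}=EY_{-jt}$,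 $\Sigma=E(y_t-Ey_t)(y_t-Ey_t)'$, $\Theta=\Sigma^{-1}$; $\Theta_{j,j}$ is its $j$th diagonal entry and $\Theta_{j,-j}$ its $j$th row with entry $j$ removed. Define $\alpha_j^*=\arg\min_{\alpha\in\mathbb R^{p-1}}E[(y_{jt}-\mu_j)-(Y_{-jt}-\mu_{-j})'\alpha]^2$, $\Sigma_f^{1/2}$ the symmetric square root, $\bar A_{-j}=A_{-j}\Sigma_f^{1/2}$, $\bar a_j=\Sigma_f^{1/2}a_j$, $\bar G_j=I_K+\bar A_{-j}'\Sigma_{U,-j}^{-1}\bar A_{-j}$. Assumption 1: for each $j$, $(y_{jt},Y_{-jt})$ are iid over $t$; $u_{jt},U_{-jt}$ are zero mean and iid over $t$; $f_t$ iid over $t$; $f_t,u_{jt},U_{-jt}$ are mutually independent. Assumption 2: (i) $\min_j\lambda_{\min}(\Sigma_{U,-j})\ge c>0$, $\max_j\sigma_j^2=\sigma^2\le C<\infty$, $\min_j\sigma_j^2\ge c>0$; (ii) $\delta_n:=\min_j\|\Sigma_{U,-j}\|_2$ and $r_n:=\max_j\|\Sigma_{U,-j}\|_2$ are nondecreasing in $n$ and $r_n/p\to0$. Assumption 3: (i) $p\le n^{C_p/2}$ for a constant $C_p>0$; (ii) for each $j$, $A_{-j}$ has full rank $K$, $p>K+1$, $\max_j\|A_{-j}\|_2=O(d_{1n})$ with $d_{1n}\to\infty$ and $d_{1n}/\sqrt p\to0$; $\Sigma_f$ has full rank $K$ and $\lambda_{\max}(\Sigma_f)\le C<\infty$. 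*)

From HB Require Import structures.
From mathcomp Require Import all_boot all_order all_algebra.
From mathcomp Require Import all_classical all_reals all_analysis.
Set Implicit Arguments. Unset Strict Implicit. Unset Printing Implicit Defensive.
Import Order.TTheory GRing.Theory Num.Theory.
Local Open Scope ring_scope.

Definition covmx d (T : measurableType d) (R : realType) (P : probability T R)
  (n : nat) (X : 'I_n -> T -> R) : 'M[R]_n :=
  \matrix_(i, k) fine (covariance P (X i) (X k)).

(* The factor model for one observation t:  y_i = sum_k A_{k i} f_k + u_i,
   i.e. y_t = A' f_t + u_t  (rows of Y = F A + U). *)
Definition model_y d (T : measurableType d) (R : realType) (K m : nat)
  (A : 'M[R]_(K, m)) (f : 'I_K -> T -> R) (u : 'I_m -> T -> R) :
  'I_m -> T -> R :=
  fun i w => \sum_(k < K) A k i * f k w + u i w.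

Definition pred_risk d (T : measurableType d) (R : realType) (P : probability T R)
  (p : nat) (y : 'I_p.+1 -> T -> R) (j : 'I_p.+1) (alpha : 'cV[R]_p) : \bar R :=
  'E_P[fun w => ((y j w - fine 'E_P[y j]) -
        \sum_(i < p) (y (lift j i) w - fine 'E_P[y (lift j i)]) * alpha i 0) ^+ 2].

Definition is_argmin_risk d (T : measurableType d) (R : realType) (P : probability T R)
  (p : nat) (y : 'I_p.+1 -> T -> R) (j : 'I_p.+1) (alpha : 'cV[R]_p) : Prop :=
  forall beta : 'cV[R]_p, (pred_risk P y j alpha <= pred_risk P y j beta)%E.

Definition qform (R : ringType) (n : nat) (M : 'M[R]_n) (v : 'cV[R]_n) : R :=
  (v^T *m M *m v) 0 0.

Definition psd_mx (R : realFieldType) (n : nat) (M : 'M[R]_n) : Prop :=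
  forall v : 'cV[R]_n, 0 <= qform M v.

From HB Require Import structures.
From mathcomp Require Import all_boot all_order all_algebra.
From mathcomp Require Import all_classical all_reals all_analysis.
From mathcomp Require Import lra.
Import Order.TTheory GRing.Theory Num.Theory.
Local Open Scope ring_scope.
Set Implicit Arguments. Unset Strict Implicit. Unset Printing Implicit Defensive.

(* Write Sigma = B'B + Sigma_U with B = Sigma_f^(1/2) A.  For each j the normal
   equations Sigma_{-j,-j} alpha = Sigma_{-j,j} of the regression of y_j on the
   other outcomes are solved by alpha_j = Sigma_{U,-j}^-1 Abar G^-1 abar (the
   push-through identity), and then the coefficient row w_j = (1, -alpha_j')
   of the residual satisfies w_j' Sigma = tau_j^2 e_j', where tau_j^2 is the
   Schur complement Sigma_jj - Sigma_{j,-j} alpha_j.  Stacking the rows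
   w_j' / tau_j^2 gives a left inverse of Sigma, i.e. Theta.  The prediction risk
   of beta is w(beta)' Sigma w(beta) = tau_j^2 + (alpha_j - beta)' Sigma_{-j,-j}
   (alpha_j - beta), so alpha_j is the unique minimiser; since B'B is positive
   semidefinite, tau_j^2 >= sigma_j^2 >= c > 0. *)

Section QuadraticForms.
Variable R : realFieldType.
Implicit Types (n : nat) (c : R).

Definition coercive n c (M : 'M[R]_n) := forall v, c * (v^T *m v) 0 0 <= qform M v.

Lemma qformE n (M : 'M[R]_n) v : qform M v = \sum_l \sum_m v l 0 * v m 0 * M l m.
Proof.
rewrite /qform mxE; under eq_bigr => m _ do rewrite mxE mulr_suml.
rewrite exchange_big; apply: eq_bigr => l _; apply: eq_bigr => m _.
by rewrite !mxE mulrAC.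
Qed.

Lemma qformD n (M N : 'M[R]_n) v : qform (M + N) v = qform M v + qform N v.
Proof. by rewrite /qform mulmxDr mulmxDl mxE. Qed.

Lemma qform_tr_mulmx n k (X : 'M[R]_(k, n)) (M : 'M[R]_k) v :
  qform (X^T *m M *m X) v = qform M (X *m v).
Proof. by rewrite /qform trmx_mul !mulmxA. Qed.

Lemma qform1 n (v : 'cV[R]_n) : qform 1%:M v = (v^T *m v) 0 0.
Proof. by rewrite /qform mulmx1. Qed.

Lemma dot_self_ge0 n (v : 'cV[R]_n) : 0 <= (v^T *m v) 0 0.
Proof. by rewrite mxE; apply: sumr_ge0 => i _; rewrite !mxE -expr2 sqr_ge0. Qed.

Lemma qform_vec0 n (M : 'M[R]_n) : qform M 0 = 0.
Proof. by rewrite /qform mulmx0 mxE. Qed.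

Lemma qform_gram_ge0 n k (X : 'M[R]_(k, n)) v : 0 <= qform (X^T *m X) v.
Proof. by rewrite -[X^T]mulmx1 qform_tr_mulmx qform1 dot_self_ge0. Qed.

Lemma dot_self_eq0 n (v : 'cV[R]_n) : ((v^T *m v) 0 0 == 0) = (v == 0).
Proof.
apply/idP/eqP => [|->]; last by rewrite mulmx0 mxE.
rewrite mxE psumr_eq0 => [/allP v0|i _]; last by rewrite !mxE -expr2 sqr_ge0.
apply/matrixP => i z; rewrite ord1 mxE.
by have /(_ (mem_index_enum i)) := v0 i; rewrite !mxE mulf_eq0 orbb => /eqP.
Qed.

Section Coercive.
Variables (n : nat) (c : R) (M : 'M[R]_n).
Hypotheses (c_gt0 : 0 < c) (M_coercive : coercive c M).

Lemma coercive_qform_le0 v : qform M v <= 0 -> v = 0.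
Proof.
move=> Mv_le0; apply/eqP; rewrite -dot_self_eq0 eq_le dot_self_ge0 andbT.
by rewrite -(pmulr_rle0 _ c_gt0) (le_trans (M_coercive v)).
Qed.

Lemma coercive_qform_ge0 v : 0 <= qform M v.
Proof. exact/(le_trans _ (M_coercive v))/mulr_ge0/dot_self_ge0/ltW. Qed.

Lemma coercive_unitmx : M \in unitmx.
Proof.
rewrite unitmxE unitfE; apply/negP => /det0P [v /negP v_neq0 vM0].
apply: v_neq0; apply/eqP; rewrite -[v]trmxK (coercive_qform_le0 (v := v^T)) ?trmx0 //.
by rewrite /qform trmxK vM0 mul0mx mxE.
Qed.

Lemma qform_invmx_ge0 : M^T = M -> forall w, 0 <= qform (invmx M) w.
Proof.
move=> M_sym w; have M_unit := coercive_unitmx.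
have -> : qform (invmx M) w = qform M (invmx M *m w).
  by rewrite /qform trmx_mul trmx_inv M_sym -!mulmxA (mulmxA M) mulmxV ?mul1mx.
exact: coercive_qform_ge0.
Qed.

End Coercive.

End QuadraticForms.

Section ResidualRegression.
Variables (R : realFieldType) (n : nat).
Implicit Types (S : 'M[R]_n.+1) (j : 'I_n.+1) (a b : 'cV[R]_n).

Definition resid_coef j a : 'cV[R]_n.+1 :=
  \col_l (if unlift j l is Some i then - a i 0 else 1).

Definition resid_var S j a := S j j - ((row' j (col j S))^T *m a) 0 0.

Lemma resid_coef_diag j a : resid_coef j a j 0 = 1.
Proof. by rewrite mxE unlift_none. Qed.

Lemma resid_coef_lift j a i : resid_coef j a (lift j i) 0 = - a i 0.
Proof. by rewrite mxE liftK. Qed.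

Lemma row'_resid_coef j a : row' j (resid_coef j a) = - a.
Proof. by apply/colP => i; rewrite !mxE liftK. Qed.

Lemma resid_coefB j a b : resid_coef j b = resid_coef j a + col' j 1%:M *m (a - b).
Proof.
apply/colP => l; rewrite !mxE; case: unliftP => [i ->|->].
  rewrite (bigD1 i) //= big1 => [|k /negbTE ki]; rewrite !mxE.
    by rewrite eqxx mul1r addr0 addKr.
  by rewrite (inj_eq lift_inj) eq_sym ki mul0r.
by rewrite big1 ?addr0 // => i _; rewrite !mxE (negbTE (neq_lift j i)) mul0r.
Qed.

Lemma col'1_tr_mulmx S j : (col' j 1%:M)^T *m S *m col' j 1%:M = row' j (col' j S).
Proof.
rewrite tr_col' trmx1 row'Esub col'Esub mul_rowsub_mx mul1mx mulmx_colsub mulmx1.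
by apply/matrixP => k l; rewrite !mxE.
Qed.

Lemma delta_mul_col'1 j : delta_mx 0 j *m col' j (1%:M : 'M[R]_n.+1) = 0 :> 'rV_n.
Proof.
rewrite col'Esub mulmx_colsub mulmx1; apply/rowP => i.
by rewrite !mxE eq_sym (negbTE (neq_lift j i)) andbF.
Qed.

Section Symmetric.
Variables (S : 'M[R]_n.+1) (j : 'I_n.+1) (a : 'cV[R]_n).
Hypotheses (S_sym : S^T = S) (a_normal : row' j (col' j S) *m a = row' j (col j S)).

Lemma resid_coef_mulmx : (resid_coef j a)^T *m S = resid_var S j a *: delta_mx 0 j.
Proof.
have S_symE l k : S l k = S k l by rewrite -{1}S_sym mxE.
have normal_eq i : \sum_l a l 0 * S (lift j l) (lift j i) = S j (lift j i).
  rewrite S_symE; have := congr1 (fun v : 'cV_n => v i 0) a_normal.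
  rewrite !mxE => <-; apply: eq_bigr => l _.
  by rewrite !mxE mulrC [S (lift j l) _]S_symE.
apply/rowP => k; rewrite !mxE (bigD1_ord j) //= !mxE unlift_none mul1r.
under eq_bigr => i _ do rewrite !mxE liftK mulNr.
rewrite sumrN; case: (unliftP j k) => [i ->|->].
  by rewrite normal_eq subrr eq_sym (negbTE (neq_lift j i)) mulr0.
rewrite eqxx mulr1 /resid_var mxE; congr (_ - _); apply: eq_bigr => i _.
by rewrite !mxE mulrC S_symE.
Qed.

Lemma qform_resid_coef b :
  qform S (resid_coef j b) = resid_var S j a + qform (row' j (col' j S)) (a - b).
Proof.
set w := resid_coef j a; set v := col' j 1%:M *m (a - b).
have w_diag : (w^T *m S *m w) 0 0 = resid_var S j a.
  by rewrite resid_coef_mulmx -scalemxAl -rowE 2!mxE resid_coef_diag mulr1.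
have wSv : w^T *m S *m v = 0.
  rewrite resid_coef_mulmx -scalemxAl /v (mulmxA (delta_mx 0 j)).
  by rewrite delta_mul_col'1 mul0mx scaler0.
have vSw : v^T *m S *m w = 0.
  by apply: trmx_inj; rewrite trmx0 trmx_mul (trmx_mul v^T S) trmxK S_sym mulmxA.
rewrite (resid_coefB j a b) -/w -/v {1}/qform [(w + v)^T]linearD /=.
rewrite !mulmxDl !mulmxDr wSv vSw addr0 add0r mxE w_diag; congr (_ + _).
by rewrite /qform /v trmx_mul !mulmxA -col'1_tr_mulmx !mulmxA.
Qed.

Lemma resid_coef_minP c : 0 < c -> coercive c (row' j (col' j S)) ->
  forall a0, (forall b, qform S (resid_coef j a0) <= qform S (resid_coef j b)) <-> a0 = a.
Proof.
move=> c_gt0 M_coercive a0; split=> [a0_min | -> b]; last first.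
  by rewrite !qform_resid_coef subrr qform_vec0 addr0 lerDl (coercive_qform_ge0 c_gt0).
have := a0_min a; rewrite !qform_resid_coef subrr qform_vec0 addr0 gerDl => le0.
by apply/esym/eqP; rewrite -subr_eq0; apply/eqP/(coercive_qform_le0 c_gt0 M_coercive).
Qed.

End Symmetric.

Lemma invmx_resid_rows S (alpha : 'I_n.+1 -> 'cV[R]_n) : S^T = S ->
  (forall j, row' j (col' j S) *m alpha j = row' j (col j S)) ->
  (forall j, resid_var S j (alpha j) != 0) ->
  invmx S = \matrix_j ((resid_var S j (alpha j))^-1 *: (resid_coef j (alpha j))^T).
Proof.
move=> S_sym alpha_normal resid_var_neq0; set X := \matrix_j _.
have XS : X *m S = 1%:M.
  apply/row_matrixP => j; rewrite row_mul rowK row1 -scalemxAl resid_coef_mulmx //.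
  by rewrite scalerA mulVf ?scale1r.
have [_ S_unit] := mulmx1_unit XS.
by rewrite -[invmx S]mul1mx -XS -mulmxA mulmxV ?mulmx1.
Qed.

End ResidualRegression.

Section Submatrices.
Variable R : pzSemiRingType.

Lemma row'_col'_mulmx m k l (i : 'I_m.+1) (h : 'I_l.+1) (X : 'M[R]_(m.+1, k))
    (Y : 'M[R]_(k, l.+1)) :
  row' i (col' h (X *m Y)) = row' i X *m col' h Y.
Proof. by rewrite row'Esub col'Esub -mulmx_colsub -mul_rowsub_mx. Qed.

Lemma row'_col_mulmx m k l (i : 'I_m.+1) (h : 'I_l) (X : 'M[R]_(m.+1, k))
    (Y : 'M[R]_(k, l)) :
  row' i (col h (X *m Y)) = row' i X *m col h Y.
Proof. by rewrite row'Esub colEsub -mulmx_colsub -mul_rowsub_mx. Qed.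

End Submatrices.

Lemma push_through_mulmx (R : comUnitRingType) m k (X : 'M[R]_(k, m)) (S : 'M[R]_m) :
  S \in unitmx -> 1%:M + X *m invmx S *m X^T \in unitmx ->
  (X^T *m X + S) *m (invmx S *m X^T *m invmx (1%:M + X *m invmx S *m X^T)) = X^T.
Proof.
move=> S_unit G_unit; rewrite mulmxDl !mulmxA mulmxV // mul1mx.
have -> : X^T *m X *m invmx S *m X^T = X^T *m (1%:M + X *m invmx S *m X^T - 1%:M).
  by rewrite addrC addKr !mulmxA.
by rewrite mulmxBr mulmx1 mulmxBl subrK mulmxK.
Qed.

Section FactorCovariance.
Variables (R : realFieldType) (K p : nat) (B : 'M[R]_(K, p.+1)) (U : 'M[R]_p.+1) (c : R).
Hypotheses (c_gt0 : 0 < c) (U_sym : U^T = U) (U_diag : forall i k, i != k -> U i k = 0)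
  (U_minor_coercive : forall j, coercive c (row' j (col' j U)))
  (U_diag_ge : forall j, c <= U j j).

Local Notation Sig := (B^T *m B + U).
Local Notation SU j := (row' j (col' j U)).
Local Notation G j := (1%:M + col' j B *m invmx (SU j) *m (col' j B)^T).

Definition factor_coef j : 'cV[R]_p :=
  invmx (SU j) *m (col' j B)^T *m invmx (G j) *m col j B.

Lemma factor_cov_sym : Sig^T = Sig.
Proof. by rewrite linearD /= trmx_mul trmxK U_sym. Qed.

Lemma row'_col_diag j : row' j (col j U) = 0.
Proof. by apply/colP => i; rewrite !mxE U_diag // eq_sym neq_lift. Qed.

Lemma row'_col'_factor_cov j : row' j (col' j Sig) = (col' j B)^T *m col' j B + SU j.
Proof. by rewrite !linearD /= row'_col'_mulmx -tr_col'. Qed.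

Lemma row'_col_factor_cov j : row' j (col j Sig) = (col' j B)^T *m col j B.
Proof. by rewrite !linearD /= row'_col_mulmx -tr_col' row'_col_diag addr0. Qed.

Lemma factor_minor_coercive j : coercive c (row' j (col' j Sig)).
Proof.
move=> v; rewrite row'_col'_factor_cov qformD -[_ * _]add0r.
apply: lerD; last exact: U_minor_coercive.
exact: qform_gram_ge0.
Qed.

Lemma factor_coef_normal j :
  row' j (col' j Sig) *m factor_coef j = row' j (col j Sig).
Proof.
have SU_unit := coercive_unitmx c_gt0 (U_minor_coercive j).
have SU_sym : (SU j)^T = SU j.
  by rewrite tr_row' tr_col' U_sym; apply/matrixP => k l; rewrite !mxE.
have G_coercive : coercive 1 (G j).
  move=> v; rewrite mul1r qformD qform1 lerDl -{1}[col' j B]trmxK qform_tr_mulmx.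
  exact: (qform_invmx_ge0 c_gt0).
have G_unit := coercive_unitmx ltr01 G_coercive.
rewrite row'_col'_factor_cov row'_col_factor_cov /factor_coef.
by rewrite -[in RHS](push_through_mulmx SU_unit G_unit) !mulmxA.
Qed.

Lemma factor_resid_var_ge j : c <= resid_var Sig j (factor_coef j).
Proof.
have U_normal : SU j *m 0 = row' j (col j U) by rewrite mulmx0 row'_col_diag.
have := qform_resid_coef factor_cov_sym (factor_coef_normal j) (factor_coef j).
rewrite subrr qform_vec0 addr0 => <-.
rewrite qformD (qform_resid_coef U_sym U_normal) /resid_var mulmx0 mxE subr0 sub0r.
have := qform_gram_ge0 B (resid_coef j (factor_coef j)).
have := coercive_qform_ge0 c_gt0 (U_minor_coercive j) (- factor_coef j).
have := U_diag_ge j; lra.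
Qed.

Lemma factor_resid_varE j : resid_var Sig j (factor_coef j) =
  ((col j B)^T *m col j B) 0 0 + U j j
  - ((col j B)^T *m col' j B *m invmx (SU j) *m (col' j B)^T *m invmx (G j) *m col j B) 0 0.
Proof.
rewrite /resid_var row'_col_factor_cov trmx_mul trmxK /factor_coef !mulmxA.
congr (_ - _); rewrite [Sig j j]mxE; congr (_ + _).
by rewrite !mxE; apply: eq_bigr => k _; rewrite !mxE.
Qed.

End FactorCovariance.

Section Covariance.
Context d (T : measurableType d) (R : realType) (P : probability T R).
Local Notation L2 := (Lfun P 2%:E).

Let two_ge1 : (1 <= 2%:E :> \bar R)%E. Proof. by rewrite lee_fin ler1n. Qed.

Lemma Lfun2_subset1 : {subset L2 <= Lfun P 1}.
Proof. exact/Lfun_subset12/fin_num_measure. Qed.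

Lemma Lfun2_lincomb n (a : 'I_n -> R) (F : 'I_n -> T -> R) :
  (forall k, F k \in L2) -> \sum_k a k \o* F k \in L2.
Proof. by move=> F2; apply: rpred_sum => // k _; exact: Lfun_scale. Qed.

Definition covr (X Y : T -> R) := fine (covariance P X Y).

Lemma covrE X Y : X \in L2 -> Y \in L2 -> covariance P X Y = (covr X Y)%:E.
Proof.
move=> X2 Y2; rewrite fineK //.
by apply: covariance_fin_num; [exact: Lfun2_subset1..|exact: Lfun2_mul_Lfun1].
Qed.

Lemma covrC X Y : covr X Y = covr Y X.
Proof. by rewrite /covr covarianceC. Qed.

Lemma covrDl X Y Z : X \in L2 -> Y \in L2 -> Z \in L2 ->
  covr (X \+ Y) Z = covr X Z + covr Y Z.
Proof.
by move=> X2 Y2 Z2; rewrite {1}/covr covarianceDl // (covrE X2 Z2) (covrE Y2 Z2).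
Qed.

Lemma covrZl a X Y : X \in L2 -> Y \in L2 -> covr (a \o* X) Y = a * covr X Y.
Proof.
move=> X2 Y2; rewrite {1}/covr covarianceZl ?(covrE X2 Y2) //.
- exact: Lfun2_subset1.
- exact: Lfun2_subset1.
- exact: Lfun2_mul_Lfun1.
Qed.

Lemma covr_lincombl n (a : 'I_n -> R) (F : 'I_n -> T -> R) Y :
  (forall k, F k \in L2) -> Y \in L2 ->
  covr (\sum_k a k \o* F k) Y = \sum_k a k * covr (F k) Y.
Proof.
move=> F2 Y2; elim: n a F F2 => [|n IH] a F F2.
  by rewrite !big_ord0 /covr covariance_cst_l.
by rewrite !big_ord_recr /= covrDl ?Lfun2_lincomb ?Lfun_scale // IH // covrZl.
Qed.

Lemma expectation_lincomb n (a : 'I_n -> R) (F : 'I_n -> T -> R) :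
  (forall k, F k \in L2) ->
  ('E_P[\sum_k a k \o* F k] = (\sum_k a k * fine 'E_P[F k])%:E)%E.
Proof.
move=> F2; elim: n a F F2 => [|n IH] a F F2; first by rewrite !big_ord0 expectation_cst.
have F1 k : F k \in Lfun P 1 by exact: Lfun2_subset1.
rewrite !big_ord_recr /= expectationD; last 2 first.
- exact/Lfun2_subset1/Lfun2_lincomb.
- exact/Lfun2_subset1/Lfun_scale.
by rewrite IH // expectationZl // -(fineK (expectation_fin_num (F1 _))) EFinD EFinM.
Qed.

Lemma covmxE n (X : 'I_n -> T -> R) i k : covmx P X i k = covr (X i) (X k).
Proof. by rewrite mxE. Qed.

Lemma expectation_sqr_centered_lincomb n (X : 'I_n -> T -> R) (v : 'cV[R]_n) :
  (forall l, X l \in L2) ->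
  ('E_P[(fun w => (\sum_l (X l w - fine 'E_P[X l]) * v l 0) ^+ 2)%R]
    = (qform (covmx P X) v)%:E)%E.
Proof.
move=> X2; set W := \sum_l v l 0 \o* X l.
have W2 : W \in L2 by exact: Lfun2_lincomb.
have centered : W \- cst (fine 'E_P[W]) = fun w => \sum_l (X l w - fine 'E_P[X l]) * v l 0.
  apply/funext => w; rewrite expectation_lincomb //= /W fct_sumE -sumrB.
  by apply: eq_bigr => l _; rewrite mulrBl [v l 0 * _]mulrC.
have -> : (fun w => (\sum_l (X l w - fine 'E_P[X l]) * v l 0) ^+ 2)
    = (W \- cst (fine 'E_P[W])) * (W \- cst (fine 'E_P[W])).
  by rewrite centered; apply/funext => w; rewrite expr2.
have -> : ('E_P[(W \- cst (fine 'E_P[W])) * (W \- cst (fine 'E_P[W]))] = covariance P W W)%E.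
  by rewrite covariance.unlock.
rewrite (covrE W2 W2) covr_lincombl // qformE; congr EFin; apply: eq_bigr => l _.
rewrite covrC covr_lincombl // mulr_sumr; apply: eq_bigr => m _.
by rewrite covmxE covrC mulrA.
Qed.

Lemma pred_risk_qform p (y : 'I_p.+1 -> T -> R) j b : (forall l, y l \in L2) ->
  pred_risk P y j b = (qform (covmx P y) (resid_coef j b))%:E.
Proof.
move=> y2; rewrite /pred_risk -expectation_sqr_centered_lincomb //.
congr ('E_P[_])%E; apply/funext => w; congr (_ ^+ 2).
rewrite (bigD1_ord j) //= resid_coef_diag mulr1 -sumrN; congr (_ + _).
by apply: eq_bigr => i _; rewrite resid_coef_lift mulrN.
Qed.

Section FactorModel.
Variables (K m : nat) (A : 'M[R]_(K, m)) (f : 'I_K -> T -> R) (u : 'I_m -> T -> R).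
Hypotheses (f2 : forall k, f k \in L2) (u2 : forall i, u i \in L2)
  (f_u_uncorr : forall k i, covariance P (f k) (u i) = 0%E).

Lemma model_yE i : model_y A f u i = \sum_k A k i \o* f k \+ u i.
Proof.
apply/funext => w; rewrite /model_y /= fct_sumE; congr (_ + _).
by apply: eq_bigr => k _; rewrite mulrC.
Qed.

Lemma model_y_Lfun2 i : model_y A f u i \in L2.
Proof. by rewrite model_yE rpredD ?Lfun2_lincomb. Qed.

Lemma covr_model_yl i Z : Z \in L2 ->
  covr (model_y A f u i) Z = \sum_k A k i * covr (f k) Z + covr (u i) Z.
Proof. by move=> Z2; rewrite model_yE covrDl ?Lfun2_lincomb ?covr_lincombl. Qed.

Lemma covmx_model_y : covmx P (model_y A f u) = A^T *m covmx P f *m A + covmx P u.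
Proof.
have f_u0 k i : covr (f k) (u i) = 0 by rewrite /covr f_u_uncorr.
apply/matrixP => i l; rewrite !covmxE covr_model_yl ?model_y_Lfun2 //.
have -> : covr (u i) (model_y A f u l) = covr (u i) (u l).
  rewrite covrC covr_model_yl // big1 => [|k _]; last by rewrite f_u0 mulr0.
  by rewrite add0r covrC.
rewrite [RHS]mxE covmxE; congr (_ + _); rewrite mxE.
under [RHS]eq_bigr => k' _ do rewrite mxE mulr_suml.
rewrite exchange_big; apply: eq_bigr => k _ /=.
rewrite covrC covr_model_yl // [covr (u l) _]covrC f_u0 addr0 mulr_sumr.
apply: eq_bigr => k' _.
by rewrite !mxE -/(covr _ _) covrC mulrA mulrAC.
Qed.

End FactorModel.

End Covariance.

Theorem lemma1 (R : realType) (d : measure_display) (T : measurableType d)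
  (P : probability T R) (K p : nat)
  (A : 'M[R]_(K, p.+1)) (f : 'I_K -> T -> R) (u : 'I_p.+1 -> T -> R)
  (Sfh : 'M[R]_K) (c C : R)
  (* square-integrable factors and errors *)
  (hf : forall k, f k \in Lfun P 2%:E) (hu : forall i, u i \in Lfun P 2%:E)
  (* zero-mean errors *)
  (hu0 : forall i, ('E_P[u i] = 0)%E)
  (* Assumption 1 (mutual independence), used through uncorrelatedness *)
  (hfu : forall k i, covariance P (f k) (u i) = 0%E)
  (huu : forall i i', i != i' -> covariance P (u i) (u i') = 0%E)
  (* Assumption 2(i) *)
  (hc : 0 < c) (hC : 0 < C)
  (hSU : forall j : 'I_p.+1, forall v : 'cV[R]_p,
      c * (v^T *m v) 0 0 <= qform (row' j (col' j (covmx P u))) v)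
  (hsig : forall j : 'I_p.+1, c <= covmx P u j j /\ covmx P u j j <= C)
  (* Assumption 3(ii) (non-asymptotic part) *)
  (hrk : forall j : 'I_p.+1, \rank (col' j A)^T = K)
  (hpK : (K.+1 < p.+1)%N)
  (hSf_rk : \rank (covmx P f) = K)
  (hSf_max : forall v : 'cV[R]_K, qform (covmx P f) v <= C * (v^T *m v) 0 0)
  (* Sfh is the symmetric square root of Sigma_f *)
  (hSfh_sym : Sfh^T = Sfh) (hSfh_psd : psd_mx Sfh)
  (hSfh_sq : Sfh *m Sfh = covmx P f) :
  forall j : 'I_p.+1,
  let y := model_y A f u in
  let Theta := invmx (covmx P y) in
  let SUj := row' j (col' j (covmx P u)) in
  let sig2 := covmx P u j j in
  let abar := Sfh *m col j A in
  let Abar := (col' j A)^T *m Sfh in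
  let G := 1%:M + Abar^T *m invmx SUj *m Abar in
  let tau2 := (abar^T *m abar) 0 0 + sig2
              - (abar^T *m Abar^T *m invmx SUj *m Abar *m invmx G *m abar) 0 0 in
  let alpha := invmx SUj *m Abar *m invmx G *m abar in
  Theta j j = 1 / tau2 /\
  (forall a0 : 'cV[R]_p, is_argmin_risk P y j a0 <-> a0 = alpha) /\
  col' j (row j Theta) = - (1 / tau2) *: alpha^T.
Proof.
move=> j; cbv zeta.
set y := model_y A f u; set U := covmx P u; set B := Sfh *m A.
have y2 : forall l, y l \in Lfun P 2%:E by exact: model_y_Lfun2.
have U_sym : U^T = U by apply/matrixP => k l; rewrite !mxE covarianceC.
have U_diag i k : i != k -> U i k = 0 by move=> ik; rewrite mxE huu.
have U_diag_ge j' : c <= U j' j' by case: (hsig j').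
have Sig_eq : covmx P y = B^T *m B + U.
  by rewrite covmx_model_y // -hSfh_sq trmx_mul hSfh_sym !mulmxA.
have normal j' : row' j' (col' j' (B^T *m B + U)) *m factor_coef B U j'
    = row' j' (col j' (B^T *m B + U)) by apply: (factor_coef_normal B hc).
have resid_var_gt0 j' : 0 < resid_var (B^T *m B + U) j' (factor_coef B U j').
  by apply: (lt_le_trans hc); apply: factor_resid_var_ge.
have Theta_eq : invmx (B^T *m B + U) = \matrix_j'
    ((resid_var (B^T *m B + U) j' (factor_coef B U j'))^-1
      *: (resid_coef j' (factor_coef B U j'))^T).
  by rewrite (invmx_resid_rows (factor_cov_sym B U_sym) normal) // => j'; rewrite gt_eqF.
have eAbar : (col' j A)^T *m Sfh = (col' j B)^T.
  by rewrite /B !col'Esub -mulmx_colsub trmx_mul hSfh_sym.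
have eabar : Sfh *m col j A = col j B by rewrite /B !colEsub mulmx_colsub.
rewrite eAbar eabar trmxK -(factor_resid_varE B U_diag) -/(factor_coef B U j).
rewrite Sig_eq Theta_eq.
split; last split.
- by rewrite 3!mxE resid_coef_diag mulr1 div1r.
- move=> a0; have Sig_coercive := factor_minor_coercive B hSU j.
  apply: iff_trans (resid_coef_minP (factor_cov_sym B U_sym) (normal j) hc Sig_coercive a0).
  by split=> a0_min b; have := a0_min b; rewrite !pred_risk_qform // Sig_eq lee_fin.
- by rewrite rowK linearZ /= -tr_row' row'_resid_coef linearN /= div1r scaleNr scalerN.
Qed.
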